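(* Consider an execution of the OffsetGCS algorithm with parameters $\rho,\mu,\kappa,\delta$ on the graph $G$ (as in the context). Suppose that for all nodes $v$, all neighbors $w$ of $v$ and all times $t$, $\left|\widehat O_{v,w}(t)-(L_w(t)-L_v(t))\right|\le\delta$. If $\kappa>2\delta$ and $\mu>\rho$, then the logical clocks form a GCS execution with parameters $\rho,\mu,\kappa$, i.e., they satisfy (I1)–(I4) below.
   Context: Let $G=(V,E)$ be a finite, connected, undirected graph with at least two nodes; $N_v$ is the set of neighbors of $v$, $\mathbb{N}=\{0,1,2,\dots\}$. Times range over $[0,\infty)$. Fix reals $\rho>0$, $\mu$, $\kappa>0$, $\delta\ge0$. Each node $v$ has a hardware clock $H_v:[0,\infty)\to\mathbb{R}$ with $t'-t\le H_v(t')-H_v(t)\le(1+\rho)(t'-t)$ for $0\le t\le t'$, and a logical clock $L_v:[0,\infty)\to\mathbb{R}$. For each node $v$, neighbor $w$ and time $t$, $v$ has an offset estimate $\widehat O_{v,w}(t)\in\mathbb{R}$; let $\widehat O_{\min,v}(t)=\min_{w\in N_v}\widehat O_{v,w}(t)$ and $\widehat O_{\max,v}(t)=\max_{w\in N_v}\widehat O_{v,w}(t)$. Node $v$ satisfies the fast trigger at $t$ if there is $s\in\mathbb{N}$ with $\widehat O_{\max,v}(t)\ge(2s+1)\kappa-\delta$ and $\widehat O_{\min,v}(t)\ge-(2s+1)\kappa-\delta$. An execution of OffsetGCS (each node runs at $(1+\mu)$ times its hardware rate while the fast trigger holds, and at its hardware rate otherwise) means: $L_v(0)=H_v(0)$;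 for all $v$ and $0\le t\le t'$, $H_v(t')-H_v(t)\le L_v(t')-L_v(t)\le(1+\mu)(H_v(t')-H_v(t))$; if $v$ satisfies the fast trigger at every time of $[t,t']$ then $L_v(t')-L_v(t)=(1+\mu)(H_v(t')-H_v(t))$; if $v$ satisfies the fast trigger at no time of $[t,t']$ then $L_v(t')-L_v(t)=H_v(t')-H_v(t)$. Node $v$ satisfies the fast condition at $t$ if there is $s\in\mathbb{N}$ with (FC1) some neighbor $x$ has $L_x(t)-L_v(t)\ge(2s+1)\kappa$ and (FC2) every neighbor $y$ has $L_v(t)-L_y(t)\le(2s+1)\kappa$; it satisfies the slow condition at $t$ if there is $s\in\mathbb{N}$ with (SC1) some neighbor $x$ has $L_v(t)-L_x(t)\ge2s\kappa$ and (SC2) every neighbor $y$ has $L_y(t)-L_v(t)\le2s\kappa$. A GCS execution with parameters $\rho,\mu,\kappa$ means: (I1) $\mu>\rho$; (I2) for all $v$, $0\le t\le t'$: $H_v(t')-H_v(t)\le L_v(t')-L_v(t)\le(1+\mu)(H_v(t')-H_v(t))$; (I3) if $v$ satisfies the fast condition throughout $[t,t']$ then $L_v(t')-L_v(t)=(1+\mu)(H_v(t')-H_v(t))$; (I4) if $v$ satisfies the slow condition throughout $[t,t']$ then $L_v(t')-L_v(t)=H_v(t')-H_v(t)$. *)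

From mathcomp Require Import all_boot all_order all_algebra.
From mathcomp Require Import all_classical all_reals.
Set Implicit Arguments. Unset Strict Implicit. Unset Printing Implicit Defensive.
Import Order.TTheory GRing.Theory Num.Theory.
Local Open Scope ring_scope.

Definition simple_graph (V : finType) (e : rel V) :=
  symmetric e /\ irreflexive e.
Definition connected_graph (V : finType) (e : rel V) :=
  forall u v : V, connect e u v.

Definition hw_clock (R : realType) (rho : R) (H : R -> R) :=
  forall t t', 0 <= t -> t <= t' ->
    t' - t <= H t' - H t /\ H t' - H t <= (1 + rho) * (t' - t).

(* Offset estimate extremes over neighbours:
   Omax >= a  <->  some neighbour w has O v w t >= a;
   Omin >= b  <->  every neighbour w has O v w t >= b
   (exactly what max/min over the finite nonempty set N_v unfold to). *)
Definition fast_trigger (R : realType) (V : finType) (e : rel V)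
  (kappa delta : R) (O : V -> V -> R -> R) (v : V) (t : R) :=
  exists s : nat,
    (exists w, e v w /\ (2 * s%:R + 1) * kappa - delta <= O v w t) /\
    (forall w, e v w -> - ((2 * s%:R + 1) * kappa) - delta <= O v w t).

Definition OffsetGCS_exec (R : realType) (V : finType) (e : rel V)
  (mu kappa delta : R) (H L : V -> R -> R) (O : V -> V -> R -> R) :=
  (forall v, L v 0 = H v 0) /\
  (forall v t t', 0 <= t -> t <= t' ->
     H v t' - H v t <= L v t' - L v t /\
     L v t' - L v t <= (1 + mu) * (H v t' - H v t)) /\
  (forall v t t', 0 <= t -> t <= t' ->
     (forall r, t <= r <= t' -> fast_trigger e kappa delta O v r) ->
     L v t' - L v t = (1 + mu) * (H v t' - H v t)) /\
  (forall v t t', 0 <= t -> t <= t' ->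
     (forall r, t <= r <= t' -> ~ fast_trigger e kappa delta O v r) ->
     L v t' - L v t = H v t' - H v t).

Definition fast_cond (R : realType) (V : finType) (e : rel V)
  (kappa : R) (L : V -> R -> R) (v : V) (t : R) :=
  exists s : nat,
    (exists x, e v x /\ (2 * s%:R + 1) * kappa <= L x t - L v t) /\
    (forall y, e v y -> L v t - L y t <= (2 * s%:R + 1) * kappa).

Definition slow_cond (R : realType) (V : finType) (e : rel V)
  (kappa : R) (L : V -> R -> R) (v : V) (t : R) :=
  exists s : nat,
    (exists x, e v x /\ (2 * s%:R) * kappa <= L v t - L x t) /\
    (forall y, e v y -> L y t - L v t <= (2 * s%:R) * kappa).

Definition GCS_exec (R : realType) (V : finType) (e : rel V)
  (rho mu kappa : R) (H L : V -> R -> R) :=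
  rho < mu /\
  (forall v t t', 0 <= t -> t <= t' ->
     H v t' - H v t <= L v t' - L v t /\
     L v t' - L v t <= (1 + mu) * (H v t' - H v t)) /\
  (forall v t t', 0 <= t -> t <= t' ->
     (forall r, t <= r <= t' -> fast_cond e kappa L v r) ->
     L v t' - L v t = (1 + mu) * (H v t' - H v t)) /\
  (forall v t t', 0 <= t -> t <= t' ->
     (forall r, t <= r <= t' -> slow_cond e kappa L v r) ->
     L v t' - L v t = H v t' - H v t).

From mathcomp Require Import all_boot all_order all_algebra.
From mathcomp Require Import all_classical all_reals.
From mathcomp Require Import lra.
Import Order.TTheory GRing.Theory Num.Theory.
Local Open Scope ring_scope.

(* Up to the error delta, the fast trigger is the fast condition with the
   thresholds lowered by delta.  Hence the fast condition implies the trigger,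
   while the slow condition at level s excludes the trigger at every level s':
   the neighbour witnessing the trigger forces s' < s, and the one witnessing
   slowness forces s < s' + 1, both because 2 delta < kappa. *)

Section AccurateEstimates.

Variables (R : realType) (V : finType) (e : rel V) (kappa delta : R).
Variables (L : V -> R -> R) (O : V -> V -> R -> R) (v : V) (t : R).
Hypothesis accurate :
  forall w, e v w -> `|O v w t - (L w t - L v t)| <= delta.

Lemma estimate_bounds w : e v w ->
  L w t - L v t - delta <= O v w t <= L w t - L v t + delta.
Proof. by move=> /accurate; rewrite ler_distl. Qed.

Lemma fast_cond_fast_trigger :
  fast_cond e kappa L v t -> fast_trigger e kappa delta O v t.
Proof.
move=> [s [[x [vx Lx]] Ly]]; exists s; split.
  by exists x; split=> //; have /andP[] := estimate_bounds _ vx; lra.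
by move=> y vy; have /andP[] := estimate_bounds _ vy; have := Ly y vy; lra.
Qed.

Lemma slow_cond_not_fast_trigger : 0 < kappa -> 2 * delta < kappa ->
  slow_cond e kappa L v t -> ~ fast_trigger e kappa delta O v t.
Proof.
move=> kappa_gt0 delta_small [s [[x [vx Lx]] Ly]] [s' [[w [vw Ow]] Oy]].
have /andP[_ Ow_ub] := estimate_bounds _ vw.
have /andP[_ Ox_ub] := estimate_bounds _ vx.
have Ox := Oy x vx; have Lw := Ly w vw.
have lt_s's : s'%:R * kappa < s%:R * kappa by lra.
have lt_ss' : s%:R * kappa < (s' + 1)%:R * kappa by rewrite natrD; lra.
rewrite ltr_pM2r // ltr_nat in lt_s's.
rewrite ltr_pM2r // ltr_nat addn1 ltnS in lt_ss'.
by move: lt_ss'; rewrite leqNgt lt_s's.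
Qed.

End AccurateEstimates.

Theorem lemma2 (R : realType) (V : finType) (e : rel V)
  (rho mu kappa delta : R) (H L : V -> R -> R) (O : V -> V -> R -> R) :
  simple_graph e -> connected_graph e -> (1 < #|V|)%N ->
  0 < rho -> 0 < kappa -> 0 <= delta ->
  (forall v, hw_clock rho (H v)) ->
  OffsetGCS_exec e mu kappa delta H L O ->
  (forall v w t, e v w -> 0 <= t ->
     `|O v w t - (L w t - L v t)| <= delta) ->
  2 * delta < kappa -> rho < mu ->
  GCS_exec e rho mu kappa H L.
Proof.
(* Only the accuracy of the estimates matters. *)
move=> _ _ _ _ kappa_gt0 _ _ [_ [rate_bounds [fast_rate slow_rate]]]
  accurate delta_small rho_lt_mu.
split=> //; split=> //; split=> v t t' t_ge0 le_tt' cond.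
- apply: fast_rate => // r /[dup] /cond fc /andP[le_tr _].
  have r_ge0 : 0 <= r by exact: le_trans t_ge0 le_tr.
  apply: fast_cond_fast_trigger fc => w vw.
  exact: accurate vw r_ge0.
- apply: slow_rate => // r /[dup] /cond sc /andP[le_tr _].
  have r_ge0 : 0 <= r by exact: le_trans t_ge0 le_tr.
  apply: slow_cond_not_fast_trigger sc => // w vw.
  exact: accurate vw r_ge0.
Qed.
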